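(* Let $E_3$ be the exceptional simple Jordan algebra of $3\times3$ Hermitian matrices over the complex octonions, and let $L(E_3)=U_{-1}\oplus U_0\oplus U_1$ be its associated graded Lie algebra, which is the simple Lie algebra of type $E_7$ with its $3$-grading. Then $L(E_3)$ has no $2$-graded representation $\rho$ with $\rho(U_{-1})\neq 0$.
   Context: $L(A)$ for a Jordan algebra $A$ (product $*$) is $U_{-1}\oplus U_0\oplus U_1$ with $U_{-1}$ the space of $A$, $U_0=\mathrm{span}\{L_a,[L_a,L_b]\}$ ($L_a(x)=a*x$), $U_1=\mathrm{span}\{\bar A, A_a\}$ where $\bar A(x,y)=x*y$, $A_a(x,y)=(x*a)*y+(y*a)*x-a*(x*y)$, with skew bracket $[U_{-1},U_{-1}]=0=[U_1,U_1]$, $[S,a]=S(a)$, $[S_1,S_2]=S_1S_2-S_2S_1$, $[B,a]=(y\mapsto B(a,y))$, $[S,B]=((x,y)\mapsto S(B(x,y))-B(Sx,y)-B(x,Sy))$. A representation $\rho$ of a graded Lie algebra $G=\bigoplus U_i$ on $V$ is $l$-graded if $V=V_1\oplus\dots\oplus V_l$ with all $V_j\neq0$ and $\rho(U_i)V_j\subset V_{i+j}$ ($V_k=0$ for $k\notin\{1,\dots,l\}$). *)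

From mathcomp Require Import all_boot all_algebra.
From mathcomp Require Import complex.
From mathcomp Require Import Rstruct.
Set Implicit Arguments. Unset Strict Implicit. Unset Printing Implicit Defensive.
Import GRing.Theory.
Local Open Scope ring_scope.

Definition Cc : fieldType := (Rdefinitions.R)[i].

(*   (a,b)(c,d) = (ac - conj(d) b, d a + b conj(c)),  conj(a,b) = (conj a, -b) *)
Section CayleyDickson.
Variable K : fieldType.

Record cdalg (T : Type) := CDAlg {
  cd0 : T; cd1 : T; cdadd : T -> T -> T; cdopp : T -> T;
  cdmul : T -> T -> T; cdconj : T -> T; cdscale : K -> T -> T }.

Definition cd_base : cdalg K :=
  @CDAlg K 0 1 +%R -%R *%R id *%R.

Definition cd_double T (o : cdalg T) : cdalg (T * T) :=
  @CDAlg (T * T) (cd0 o, cd0 o) (cd1 o, cd0 o)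
    (fun x y => (cdadd o x.1 y.1, cdadd o x.2 y.2))
    (fun x => (cdopp o x.1, cdopp o x.2))
    (fun x y => (cdadd o (cdmul o x.1 y.1) (cdopp o (cdmul o (cdconj o y.2) x.2)),
                 cdadd o (cdmul o y.2 x.1) (cdmul o x.2 (cdconj o y.1))))
    (fun x => (cdconj o x.1, cdopp o x.2))
    (fun k x => (cdscale o k x.1, cdscale o k x.2)).

Definition Oct := (((K * K) * (K * K)) * ((K * K) * (K * K)))%type.
Definition octA : cdalg Oct := cd_double (cd_double (cd_double cd_base)).

Definition oadd := cdadd octA.
Definition omul := cdmul octA.
Definition oconj := cdconj octA.
Definition oscale := cdscale octA.
Definition o0 := cd0 octA.
Definition oC (k : K) : Oct := oscale k (cd1 octA).

Definition mkOct (f : nat -> K) : Oct :=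
  (((f 0%N, f 1%N), (f 2%N, f 3%N)), ((f 4%N, f 5%N), (f 6%N, f 7%N))).
Definition octCoord (x : Oct) (k : nat) : K :=
  match x with (((a0, a1), (a2, a3)), ((a4, a5), (a6, a7))) =>
    nth 0 [:: a0; a1; a2; a3; a4; a5; a6; a7] k end.

(* The Albert algebra E_3 = 3x3 Hermitian matrices over the octonions  *)
(* over K, with Jordan product X o Y = (XY + YX)/2.  A Hermitian matrix *)
(*      [ d0      x3     x2^  ]                                          *)
(*      [ x3^     d1     x1  ]                                          *)
(*      [ x2      x1^    d2  ]                                          *)
(* (x^ = octonion conjugate) is encoded by its 27 coordinates: d0 d1 d2 *)
(* (indices 0..2), then the                                            *)
(* coordinates of x1 (3..10), x2 (11..18), x3 (19..26).                 *)
Definition E3 := 'rV[K]_27.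

Definition OMat := 'I_3 -> 'I_3 -> Oct.

Definition vc (v : E3) (k : nat) : K := v ord0 (inord k).

Definition herm (v : E3) : OMat := fun i j =>
  let x1 := mkOct (fun k => vc v (3 + k)) in
  let x2 := mkOct (fun k => vc v (11 + k)) in
  let x3 := mkOct (fun k => vc v (19 + k)) in
  match nat_of_ord i, nat_of_ord j with
  | 0, 0 => oC (vc v 0) | 1, 1 => oC (vc v 1) | 2, 2 => oC (vc v 2)
  | 1, 2 => x1 | 2, 1 => oconj x1
  | 2, 0 => x2 | 0, 2 => oconj x2
  | 0, 1 => x3 | 1, 0 => oconj x3
  | _, _ => o0
  end%N.

Definition unherm (M : OMat) : E3 :=
  \row_(i < 27)
    (if (i < 3)%N then octCoord (M (inord i) (inord i)) 0
     else if (i < 11)%N then octCoord (M (inord 1) (inord 2)) (i - 3)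
     else if (i < 19)%N then octCoord (M (inord 2) (inord 0)) (i - 11)
     else octCoord (M (inord 0) (inord 1)) (i - 19)).

Definition omatmul (X Y : OMat) : OMat := fun i j =>
  oadd (omul (X i (inord 0)) (Y (inord 0) j))
    (oadd (omul (X i (inord 1)) (Y (inord 1) j))
          (omul (X i (inord 2)) (Y (inord 2) j))).

Definition E3prod (u v : E3) : E3 :=
  let X := herm u in let Y := herm v in
  unherm (fun i j => oscale (1 / 2%:R) (oadd (omatmul X Y i j) (omatmul Y X i j))).

End CayleyDickson.

Section LieConstruction.
Variables (K : fieldType) (A : lmodType K) (jp : A -> A -> A).

Definition Lmul (a : A) : A -> A := fun x => jp a x.
Definition fcomm (S T : A -> A) : A -> A := fun x => S (T x) - T (S x).
Definition Abar : A -> A -> A := fun x y => jp x y.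
Definition Aa (a : A) : A -> A -> A :=
  fun x y => jp (jp x a) y + jp (jp y a) x - jp a (jp x y).

Definition inU0 (S : A -> A) : Prop :=
  exists (r1 : seq (K * A)) (r2 : seq (K * A * A)), forall x,
    S x = \sum_(p <- r1) p.1 *: Lmul p.2 x
        + \sum_(p <- r2) p.1.1 *: fcomm (Lmul p.1.2) (Lmul p.2) x.

Definition inU1 (B : A -> A -> A) : Prop :=
  exists (r1 : seq K) (r2 : seq (K * A)), forall x y,
    B x y = \sum_(c <- r1) c *: Abar x y + \sum_(p <- r2) p.1 *: Aa p.2 x y.

(* elements a + S + B of U_{-1} (+) U_0 (+) U_1 *)
Record Lel := mkL { lm : A; l0 : A -> A; l1 : A -> A -> A }.

Definition inL (x : Lel) : Prop := inU0 (l0 x) /\ inU1 (l1 x).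

Definition Ladd (x y : Lel) : Lel :=
  mkL (lm x + lm y) (fun z => l0 x z + l0 y z) (fun u w => l1 x u w + l1 y u w).
Definition Lscale (c : K) (x : Lel) : Lel :=
  mkL (c *: lm x) (fun z => c *: l0 x z) (fun u w => c *: l1 x u w).

Definition SBbr (S : A -> A) (B : A -> A -> A) : A -> A -> A :=
  fun x y => S (B x y) - B (S x) y - B x (S y).
Definition BAbr (B : A -> A -> A) (a : A) : A -> A := fun y => B a y.

(* skew bracket extended bilinearly, [U_{-1},U_{-1}] = 0 = [U_1,U_1] *)
Definition Lbr (x y : Lel) : Lel :=
  mkL (l0 x (lm y) - l0 y (lm x))
      (fun z => fcomm (l0 x) (l0 y) z + BAbr (l1 x) (lm y) z - BAbr (l1 y) (lm x) z)
      (fun u w => SBbr (l0 x) (l1 y) u w - SBbr (l0 y) (l1 x) u w).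

Definition zf : A -> A := fun _ => 0.
Definition zb : A -> A -> A := fun _ _ => 0.

Definition homog (i : int) (x : Lel) : Prop :=
  (i = -1 /\ exists a, x = mkL a zf zb)
  \/ (i = 0 /\ exists S, inU0 S /\ x = mkL 0 S zb)
  \/ (i = 1 /\ exists B, inU1 B /\ x = mkL 0 zf B).

Variable V : lmodType K.

Definition is_rep (rho : Lel -> V -> V) : Prop :=
  (forall x, inL x -> forall (c : K) (u w : V),
      rho x (c *: u + w) = c *: rho x u + rho x w)
  /\ (forall x y (c : K), inL x -> inL y -> forall v,
      rho (Ladd (Lscale c x) y) v = c *: rho x v + rho y v)
  /\ (forall x y, inL x -> inL y -> forall v,
      rho (Lbr x y) v = rho x (rho y v) - rho y (rho x v)).

Definition subspace (P : V -> Prop) : Prop :=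
  P 0 /\ forall (c : K) u w, P u -> P w -> P (c *: u + w).

Definition Vext (l : nat) (W : nat -> V -> Prop) (k : int) : V -> Prop :=
  if (1 <= k) && (k <= l%:Z) then W `|k|%N else (fun v => v = 0).

Definition graded_rep (l : nat) (W : nat -> V -> Prop) (rho : Lel -> V -> V) : Prop :=
  is_rep rho
  /\ (forall j, (1 <= j <= l)%N -> subspace (W j) /\ exists v, W j v /\ v <> 0)
  /\ (forall v, exists vs : nat -> V,
        (forall j, (1 <= j <= l)%N -> W j (vs j)) /\ v = \sum_(1 <= j < l.+1) vs j)
  /\ (forall vs : nat -> V, (forall j, (1 <= j <= l)%N -> W j (vs j)) ->
        \sum_(1 <= j < l.+1) vs j = 0 -> forall j, (1 <= j <= l)%N -> vs j = 0)
  /\ (forall (i : int) x, homog i x -> forall j v, (1 <= j <= l)%N -> W j v ->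
        Vext l W (i + j%:Z) (rho x v)).

End LieConstruction.

From mathcomp Require Import all_boot all_algebra.
From mathcomp Require Import complex Rstruct ring.
From Stdlib Require Import FunctionalExtensionality.
Set Implicit Arguments. Unset Strict Implicit. Unset Printing Implicit Defensive.
Local Open Scope ring_scope.
Import GRing.Theory Num.Theory.

(* In a 2-graded representation V = V_1 (+) V_2 of L(E_3), an element a of
   U_(-1) acts as X_a : V_2 -> V_1, Abar in U_1 as Y : V_1 -> V_2, and
   [Y, X_a] = L_a.  Hence Q_a := -2 Y X_a vanishes on V_1, equals -2 L_a on
   V_2 and satisfies Q_(a o b) = (Q_a Q_b + Q_b Q_a) / 2: it is a special
   representation of E_3.  In a special representation the sandwiches
   Q_(e_i) Q_x Q_(e_j) by the diagonal idempotents multiply like octonion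
   matrix units, so the non-associativity of the octonions kills one of them,
   and from there Q_1 = 0.  Thus L_1 = 0 on V_2, and X_a = X_(1 o a) = [L_1, X_a]
   forces X_a = 0. *)

Section LinearFunctions.
Variables (R : pzRingType) (U V : lmodType R) (f : U -> V).
Hypothesis f_lin : linear f.

Lemma linear_fun0 : f 0 = 0.
Proof.
have := f_lin 1 0 0; rewrite !scale1r addr0 => f0D.
by apply: (addrI (f 0)); rewrite addr0 -f0D.
Qed.

Lemma linear_funD u w : f (u + w) = f u + f w.
Proof. by rewrite -[u in LHS]scale1r f_lin scale1r. Qed.

Lemma linear_funZ c u : f (c *: u) = c *: f u.
Proof. by rewrite -[_ *: u]addr0 f_lin linear_fun0 addr0. Qed.

Lemma linear_funN u : f (- u) = - f u.
Proof. by rewrite -scaleN1r linear_funZ scaleN1r. Qed.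

End LinearFunctions.

Ltac oct_case x := case: x => [[[? ?] [? ?]] [[? ?] [? ?]]].
Ltac oct_ring := rewrite /oC /o0 /mkOct /oadd /omul /oscale /oconj /=;
  congr (((_, _), (_, _)), ((_, _), (_, _))); ring.

Section AlbertLinear.
Variable K : fieldType.
Implicit Types (x y z : Oct K) (c : K) (u v w : E3 K).

Lemma oaddE x y : oadd x y = x + y. Proof. by []. Qed.

Lemma omulDl x y z : omul (oadd x y) z = oadd (omul x z) (omul y z).
Proof. by oct_case x; oct_case y; oct_case z; oct_ring. Qed.

Lemma omulDr x y z : omul x (oadd y z) = oadd (omul x y) (omul x z).
Proof. by oct_case x; oct_case y; oct_case z; oct_ring. Qed.

Lemma omulZl c x y : omul (oscale c x) y = oscale c (omul x y).
Proof. by oct_case x; oct_case y; oct_ring. Qed.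

Lemma omulZr c x y : omul x (oscale c y) = oscale c (omul x y).
Proof. by oct_case x; oct_case y; oct_ring. Qed.

Lemma oscaleDr c x y : oscale c (oadd x y) = oadd (oscale c x) (oscale c y).
Proof. by oct_case x; oct_case y; oct_ring. Qed.

Lemma octCoordZD c x y k :
  octCoord (oadd (oscale c x) y) k = c * octCoord x k + octCoord y k.
Proof.
oct_case x; oct_case y; rewrite /oadd /oscale /=.
by do 8 (case: k => [|k]; first by []); rewrite /= !nth_nil mulr0 addr0.
Qed.

Lemma vcZD c u w m : vc (c *: u + w) m = c * vc u m + vc w m.
Proof. by rewrite /vc !mxE. Qed.

Lemma hermZD c u w :
  herm (c *: u + w) = fun i j => oadd (oscale c (herm u i j)) (herm w i j).
Proof.
apply: functional_extensionality => i; apply: functional_extensionality => j.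
rewrite /herm; case: i => [[|[|[|i]]] Hi] /=; case: j => [[|[|[|j]]] Hj] /=;
  rewrite /mkOct /= ?vcZD; oct_ring.
Qed.

Lemma unherm_ext (M N : OMat K) : (forall i j, M i j = N i j) -> unherm M = unherm N.
Proof. by move=> MN; apply/rowP => i; rewrite !mxE !MN. Qed.

Lemma unhermZD c (M N : OMat K) :
  unherm (fun i j => oadd (oscale c (M i j)) (N i j)) = c *: unherm M + unherm N.
Proof.
apply/rowP => i; rewrite !mxE; by case: ifP => _; [|case: ifP => _; [|case: ifP => _]];
  rewrite octCoordZD.
Qed.

Lemma omatmulZDl c (X X' Y : OMat K) i j :
  omatmul (fun k l => oadd (oscale c (X k l)) (X' k l)) Y i j
  = oadd (oscale c (omatmul X Y i j)) (omatmul X' Y i j).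
Proof.
rewrite /omatmul !omulDl !omulZl !oscaleDr !oaddE.
by rewrite -[RHS]addrACA -[X in _ = _ + X]addrACA.
Qed.

Lemma omatmulZDr c (X Y Y' : OMat K) i j :
  omatmul X (fun k l => oadd (oscale c (Y k l)) (Y' k l)) i j
  = oadd (oscale c (omatmul X Y i j)) (omatmul X Y' i j).
Proof.
rewrite /omatmul !omulDr !omulZr !oscaleDr !oaddE.
by rewrite -[RHS]addrACA -[X in _ = _ + X]addrACA.
Qed.

Lemma E3prodl_is_linear v : linear (fun u => E3prod u v).
Proof.
move=> c u w; rewrite /E3prod -unhermZD hermZD; apply: unherm_ext => i j.
rewrite omatmulZDl omatmulZDr; move: (omatmul _ _ i j) (omatmul _ _ i j) => x x'.
move: (omatmul _ _ i j) (omatmul _ _ i j) => y y'.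
by oct_case x; oct_case x'; oct_case y; oct_case y'; oct_ring.
Qed.

Lemma E3prodC u v : E3prod u v = E3prod v u.
Proof. by rewrite /E3prod; apply: unherm_ext => i j; rewrite !oaddE addrC. Qed.

Lemma E3prod0l v : E3prod 0 v = 0.
Proof. exact: linear_fun0 (E3prodl_is_linear v). Qed.

Lemma E3prod0r u : E3prod u 0 = 0.
Proof. by rewrite E3prodC E3prod0l. Qed.

End AlbertLinear.

(* [\row] and [inord] do not reduce under [vm_compute]; the following copies
   of [herm], [omatmul], [unherm] and [E3prod] act on coordinate functions
   [nat -> K] and do. *)
Definition o3 (n : nat) : 'I_3 :=
  match n with 0 => @Ordinal 3 0 isT | 1 => @Ordinal 3 1 isT | _ => @Ordinal 3 2 isT end.

Lemma inord_o3 n : (n < 3)%N -> inord n = o3 n.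
Proof. by move=> n_lt3; apply: val_inj; rewrite /= inordK //; case: n n_lt3 => [|[|[|]]]. Qed.

Section Computable.
Variable K : fieldType.

Definition hermc (f : nat -> K) : OMat K := fun i j =>
  let x1 := mkOct (fun k => f (3 + k)%N) in
  let x2 := mkOct (fun k => f (11 + k)%N) in
  let x3 := mkOct (fun k => f (19 + k)%N) in
  match nat_of_ord i, nat_of_ord j with
  | 0, 0 => oC (f 0%N) | 1, 1 => oC (f 1%N) | 2, 2 => oC (f 2%N)
  | 1, 2 => x1 | 2, 1 => oconj x1
  | 2, 0 => x2 | 0, 2 => oconj x2
  | 0, 1 => x3 | 1, 0 => oconj x3
  | _, _ => o0 K
  end%N.

Definition omatmulc (X Y : OMat K) : OMat K := fun i j =>
  oadd (omul (X i (o3 0)) (Y (o3 0) j))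
    (oadd (omul (X i (o3 1)) (Y (o3 1) j)) (omul (X i (o3 2)) (Y (o3 2) j))).

Definition unhermc (M : OMat K) (t : nat) : K :=
  if (t < 3)%N then octCoord (M (o3 t) (o3 t)) 0
  else if (t < 11)%N then octCoord (M (o3 1) (o3 2)) (t - 3)
  else if (t < 19)%N then octCoord (M (o3 2) (o3 0)) (t - 11)
  else octCoord (M (o3 0) (o3 1)) (t - 19).

Definition E3prodc (f g : nat -> K) : nat -> K :=
  unhermc (fun i j => oscale (1 / 2%:R)
    (oadd (omatmulc (hermc f) (hermc g) i j) (omatmulc (hermc g) (hermc f) i j))).

Lemma E3prodE (u v : E3 K) z (t : 'I_27) : E3prod u v z t = E3prodc (vc u) (vc v) t.
Proof.
rewrite /E3prod /unherm mxE /E3prodc /unhermc /omatmul /omatmulc.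
case: ifP => t_lt3; first by rewrite !inord_o3.
by rewrite !(inord_o3 (n := 0)) // !(inord_o3 (n := 1)) // !(inord_o3 (n := 2)).
Qed.

End Computable.

Section Transfer.
Variables (K L : fieldType) (phi : {rmorphism K -> L}).

Definition octmap (x : Oct K) : Oct L :=
  let: (((a0, a1), (a2, a3)), ((a4, a5), (a6, a7))) := x in
  (((phi a0, phi a1), (phi a2, phi a3)), ((phi a4, phi a5), (phi a6, phi a7))).

Ltac octmap_simpl := rewrite /oadd /omul /oscale /=;
  rewrite ?(rmorphD, rmorphN, rmorphM, rmorph0, rmorph1).

Lemma octmapD x y : octmap (oadd x y) = oadd (octmap x) (octmap y).
Proof. by oct_case x; oct_case y; octmap_simpl. Qed.

Lemma octmapM x y : octmap (omul x y) = omul (octmap x) (octmap y).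
Proof. by oct_case x; oct_case y; octmap_simpl. Qed.

Lemma octmapZ c x : octmap (oscale c x) = oscale (phi c) (octmap x).
Proof. by oct_case x; octmap_simpl. Qed.

Lemma octCoord_map x k : octCoord (octmap x) k = phi (octCoord x k).
Proof.
by oct_case x; do 8 (case: k => [|k]; first by []); rewrite /= !nth_nil rmorph0.
Qed.

Lemma hermc_map (f : nat -> L) (f' : nat -> K) :
  (forall m, (m < 27)%N -> f m = phi (f' m)) -> forall i j, hermc f i j = octmap (hermc f' i j).
Proof.
move=> ff' i j; rewrite /hermc.
case: i => [[|[|[|i]]] Hi] /=; case: j => [[|[|[|j]]] Hj] /=;
  by rewrite /oC /o0 /mkOct /oscale /oconj /= ?ff' // ?rmorphM ?rmorphN ?rmorph1 ?rmorph0.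
Qed.

Lemma E3prodc_map (f g : nat -> L) (f' g' : nat -> K) t :
  (forall m, (m < 27)%N -> f m = phi (f' m)) -> (forall m, (m < 27)%N -> g m = phi (g' m)) ->
  E3prodc f g t = phi (E3prodc f' g' t).
Proof.
move=> ff' gg'; rewrite /E3prodc /unhermc /omatmulc !(hermc_map ff') !(hermc_map gg').
have phi_half : phi (1 / 2%:R) = 1 / 2%:R by rewrite fmorph_div rmorph1 rmorph_nat.
by case: ifP => _; [|case: ifP => _; [|case: ifP => _]];
  rewrite -!octmapM -!octmapD -phi_half -octmapZ octCoord_map.
Qed.

End Transfer.

Definition eps (K : fieldType) (n : nat) : E3 K := \row_(i < 27) (i == n :> nat)%:R.

Definition E3one (K : fieldType) : E3 K := eps K 0 + eps K 1 + eps K 2.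

Lemma vc_eps (K : fieldType) n m : (m < 27)%N -> vc (eps K n) m = (m == n)%:R.
Proof. by move=> m_lt27; rewrite /vc mxE inordK. Qed.

Section Unit.
Variable K : fieldType.
Hypothesis two_neq0 : (2%:R : K) != 0.

Lemma hermc_one i j : hermc (vc (E3one K)) i j = if i == j then oC 1 else o0 K.
Proof.
rewrite /hermc /E3one; case: i => [[|[|[|i]]] Hi] //=; case: j => [[|[|[|j]]] Hj] //=;
  by rewrite /oC /o0 /mkOct /oconj /oscale /vc /= !mxE !inordK //= ?addr0 ?add0r ?oppr0.
Qed.

Lemma omul1l (y : Oct K) : omul (oC 1) y = y. Proof. by oct_case y; oct_ring. Qed.
Lemma omul1r (y : Oct K) : omul y (oC 1) = y. Proof. by oct_case y; oct_ring. Qed.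
Lemma omul0l (y : Oct K) : omul (o0 K) y = o0 K. Proof. by oct_case y; oct_ring. Qed.
Lemma omul0r (y : Oct K) : omul y (o0 K) = o0 K. Proof. by oct_case y; oct_ring. Qed.
Lemma oadd0l (y : Oct K) : oadd (o0 K) y = y. Proof. by oct_case y; oct_ring. Qed.
Lemma oadd0r (y : Oct K) : oadd y (o0 K) = y. Proof. by oct_case y; oct_ring. Qed.

Lemma oscale_half (y : Oct K) : oscale (1 / 2%:R) (oadd y y) = y.
Proof.
have half_double (a : K) : 1 / 2%:R * (a + a) = a by field.
by oct_case y; rewrite /oadd /oscale /= !half_double.
Qed.

Lemma omatmulc_onel (Y : OMat K) i j : omatmulc (hermc (vc (E3one K))) Y i j = Y i j.
Proof.
rewrite /omatmulc !hermc_one; case: i => [[|[|[|i]]] Hi] //=;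
  rewrite ?omul1l ?omul0l ?oadd0l ?oadd0r; by congr (Y _ _); apply: val_inj.
Qed.

Lemma omatmulc_oner (Y : OMat K) i j : omatmulc Y (hermc (vc (E3one K))) i j = Y i j.
Proof.
rewrite /omatmulc !hermc_one; case: j => [[|[|[|j]]] Hj] //=;
  rewrite ?omul1r ?omul0r ?oadd0l ?oadd0r; by congr (Y _ _); apply: val_inj.
Qed.

Lemma unhermcK (g : nat -> K) t : (t < 27)%N -> unhermc (hermc g) t = g t.
Proof.
move=> t_lt27.
by do 27 (case: t t_lt27 => [|t] t_lt27; [by rewrite /unhermc /= ?mulr1 | ]).
Qed.

Lemma E3prod1l (a : E3 K) : E3prod (E3one K) a = a.
Proof.
apply/rowP => t; rewrite E3prodE /E3prodc.
have -> : unhermc (fun i j => oscale (1 / 2%:R)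
      (oadd (omatmulc (hermc (vc (E3one K))) (hermc (vc a)) i j)
            (omatmulc (hermc (vc a)) (hermc (vc (E3one K))) i j))) t
    = unhermc (hermc (vc a)) t.
  by rewrite /unhermc !omatmulc_onel !omatmulc_oner !oscale_half.
by rewrite unhermcK // /vc inord_val; congr (a _ _); apply: val_inj.
Qed.

End Unit.

(* Coordinate [n] in [3, 27) belongs to the off-diagonal entry [x_(b+1)],
   [b = offdiag_block n], which sits in the Peirce space of [e_(b+1)] and
   [e_(b+2)] (indices mod 3) and is annihilated by [e_b]. *)
Definition offdiag_block (n : nat) : nat :=
  if (n < 11)%N then 0 else if (n < 19)%N then 1 else 2.

Definition epsQ (n m : nat) : rat := (m == n)%:R.

Definition eps_prod_is (i j : nat) (f : nat -> rat) : bool :=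
  all (fun t => E3prodc (epsQ i) (epsQ j) t == f t) (iota 0 27).

Section BasisProducts.
Variable F : numFieldType.

Lemma E3prod_eps i j f :
  eps_prod_is i j f -> E3prod (eps F i) (eps F j) = \row_(t < 27) ratr (f t).
Proof.
move=> /allP tab; apply/rowP => t.
rewrite E3prodE mxE (E3prodc_map (phi := ratr) (f' := epsQ i) (g' := epsQ j)).
- by congr ratr; apply/eqP/tab; rewrite mem_iota add0n ltn_ord.
- by move=> m m_lt27; rewrite vc_eps // /epsQ rmorph_nat.
- by move=> m m_lt27; rewrite vc_eps // /epsQ rmorph_nat.
Qed.

Lemma E3prod_eps_scale i j k (c : rat) :
  eps_prod_is i j (fun t => (t == k)%:R * c) ->
  E3prod (eps F i) (eps F j) = ratr c *: eps F k.
Proof. by move/E3prod_eps ->; apply/rowP => t; rewrite !mxE rmorphM rmorph_nat mulrC. Qed.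

Lemma E3prod_eps_add i j k l :
  eps_prod_is i j (fun t => (t == k)%:R + (t == l)%:R) ->
  E3prod (eps F i) (eps F j) = eps F k + eps F l.
Proof. by move/E3prod_eps ->; apply/rowP => t; rewrite !mxE rmorphD !rmorph_nat. Qed.

Lemma ratr_half : ratr 2^-1 = 2^-1 :> F.
Proof. by rewrite fmorphV rmorph_nat. Qed.

Lemma E3prod_eps_half i j k :
  eps_prod_is i j (fun t => (t == k)%:R * 2^-1) ->
  E3prod (eps F i) (eps F j) = 2^-1 *: eps F k.
Proof. by rewrite -ratr_half; apply: E3prod_eps_scale. Qed.

Lemma E3prod_eps_Nhalf i j k :
  eps_prod_is i j (fun t => (t == k)%:R * - 2^-1) ->
  E3prod (eps F i) (eps F j) = - 2^-1 *: eps F k.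
Proof. by rewrite -ratr_half -rmorphN; apply: E3prod_eps_scale. Qed.

Lemma E3prod_diag i j : (i < 3)%N -> (j < 3)%N ->
  E3prod (eps F i) (eps F j) = (i == j)%:R *: eps F i.
Proof.
have tab : all (fun i => all (fun j =>
    eps_prod_is i j (fun t => (t == i)%:R * (i == j)%:R)) (iota 0 3)) (iota 0 3).
  by vm_compute.
move=> i_lt3 j_lt3; rewrite -ratr_nat; apply: E3prod_eps_scale.
move/allP: tab => /(_ i); rewrite mem_iota i_lt3 => /(_ isT) /allP /(_ j).
by rewrite mem_iota j_lt3 => /(_ isT).
Qed.

Lemma E3prod_diag_offdiag d n : (d < 3)%N -> (3 <= n < 27)%N ->
  E3prod (eps F d) (eps F n) = (if d == offdiag_block n then 0 else 2^-1) *: eps F n.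
Proof.
have tab : all (fun d => all (fun n => eps_prod_is d n
    (fun t => (t == n)%:R * (if d == offdiag_block n then 0 else 2^-1))) (iota 3 24)) (iota 0 3).
  by vm_compute.
move=> d_lt3 n_range.
have -> : (if d == offdiag_block n then 0 else 2^-1) =
    ratr (if d == offdiag_block n then 0 else 2^-1) :> F.
  by case: (_ == _); [exact: esym (ratr_nat _ 0) | exact: esym ratr_half].
apply: E3prod_eps_scale.
move/allP: tab => /(_ d); rewrite mem_iota d_lt3 => /(_ isT) /allP /(_ n).
by rewrite mem_iota n_range => /(_ isT).
Qed.

End BasisProducts.

Section HalfScaling.
Variables (F : numFieldType) (V : lmodType F).
Implicit Types x y : V.

Lemma two_neq0 : (2%:R : F) != 0.
Proof. by rewrite pnatr_eq0. Qed.

Lemma half_neq0 : (2^-1 : F) != 0.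
Proof. by rewrite invr_eq0 two_neq0. Qed.

Lemma double_eq0 x : x + x = 0 -> x = 0.
Proof. by rewrite -mulr2n -scaler_nat => /eqP; rewrite scaler_eq0 pnatr_eq0 => /eqP. Qed.

Lemma scale_half_double x : 2^-1 *: (x + x) = x.
Proof. by rewrite -mulr2n -scaler_nat scalerA mulVf ?pnatr_eq0 // scale1r. Qed.

Lemma scale_half_inj : injective (fun x => 2^-1 *: x : V).
Proof. exact: scalerI half_neq0. Qed.

Lemma scale_half_eq0 x : 2^-1 *: x = 0 -> x = 0.
Proof. by move/eqP; rewrite scaler_eq0 (negbTE half_neq0) => /eqP. Qed.

Lemma idem_anticomm_mul0 (P T : V -> V) : linear P ->
  (forall v, P (P v) = P v) -> (forall v, P (T v) + T (P v) = 0) ->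
  forall v, P (T v) = 0.
Proof.
move=> P_lin P_idem PT_anti v.
have PT_opp u : P (T u) = - T (P u) by apply/eqP; rewrite -subr_eq0 opprK PT_anti.
have PT_comm : P (T v) = T (P v).
  by rewrite -P_idem PT_opp (linear_funN P_lin) PT_opp opprK P_idem.
by apply: double_eq0; rewrite {2}PT_comm PT_anti.
Qed.

End HalfScaling.

Section SpecialRepresentation.
Variables (F : numFieldType) (V : lmodType F) (Q : E3 F -> V -> V).
Hypothesis Q_lin_elt : forall v, linear (fun a => Q a v).
Hypothesis Q_lin : forall a, linear (Q a).
Hypothesis Q_jordan :
  forall a b v, Q (E3prod a b) v = 2^-1 *: (Q a (Q b v) + Q b (Q a v)).

Local Notation q n := (Q (eps F n)).

Lemma QZl c a v : Q (c *: a) v = c *: Q a v.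
Proof. exact: (linear_funZ (Q_lin_elt v)). Qed.

Lemma QDl a b v : Q (a + b) v = Q a v + Q b v.
Proof. exact: (linear_funD (Q_lin_elt v)). Qed.

Lemma Qr0 a : Q a 0 = 0.
Proof. exact: (linear_fun0 (Q_lin a)). Qed.

Lemma QZr a c v : Q a (c *: v) = c *: Q a v.
Proof. exact: (linear_funZ (Q_lin a)). Qed.

Lemma QDr a v w : Q a (v + w) = Q a v + Q a w.
Proof. exact: (linear_funD (Q_lin a)). Qed.

Lemma QNr a v : Q a (- v) = - Q a v.
Proof. exact: (linear_funN (Q_lin a)). Qed.

Lemma Q_basis_prod i j k c v : E3prod (eps F i) (eps F j) = c *: eps F k ->
  c *: q k v = 2^-1 *: (q i (q j v) + q j (q i v)).
Proof. by move=> prod_ij; rewrite -Q_jordan prod_ij QZl. Qed.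

Lemma Q_square n k l v : E3prod (eps F n) (eps F n) = eps F k + eps F l ->
  q k v + q l v = q n (q n v).
Proof. by move=> sq_n; rewrite -QDl -sq_n Q_jordan scale_half_double. Qed.

Lemma Q_diag_idem d v : (d < 3)%N -> q d (q d v) = q d v.
Proof.
move=> d_lt3; have := Q_basis_prod v (E3prod_diag F d_lt3 d_lt3).
by rewrite eqxx scale1r scale_half_double.
Qed.

Lemma Q_diag_orth i j v : (i < 3)%N -> (j < 3)%N -> i != j -> q i (q j v) = 0.
Proof.
move=> i_lt3 j_lt3 ij; apply: (idem_anticomm_mul0 (Q_lin _)) => [u|u].
  exact: Q_diag_idem.
have := Q_basis_prod u (E3prod_diag F i_lt3 j_lt3).
by rewrite (negbTE ij) scale0r => /esym /scale_half_eq0.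
Qed.

Lemma offdiag_block_lt3 n : (offdiag_block n < 3)%N.
Proof. by rewrite /offdiag_block; case: ifP => //; case: ifP. Qed.

Lemma Q_peirce_half d n v : (d < 3)%N -> (3 <= n < 27)%N -> d != offdiag_block n ->
  q d (q n v) + q n (q d v) = q n v.
Proof.
move=> d_lt3 n_range dn; have := Q_basis_prod v (E3prod_diag_offdiag F d_lt3 n_range).
by rewrite (negbTE dn) => /scale_half_inj.
Qed.

Lemma Q_peirce_null n v : (3 <= n < 27)%N -> q (offdiag_block n) (q n v) = 0.
Proof.
move=> n_range; have b_lt3 := offdiag_block_lt3 n.
apply: (idem_anticomm_mul0 (Q_lin _)) => [u|u]; first exact: Q_diag_idem.
have := Q_basis_prod u (E3prod_diag_offdiag F b_lt3 n_range).
by rewrite eqxx scale0r => /esym /scale_half_eq0.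
Qed.

(* The side conditions say that [y] lies in the Peirce space of [e_J] and
   [e_K]. *)
Lemma Q_chain_scaled x y z I J K c v :
  E3prod (eps F x) (eps F y) = c *: eps F z ->
  (3 <= y < 27)%N -> offdiag_block y = I -> (J < 3)%N -> (K < 3)%N -> J != I -> J != K ->
  c *: q I (q z (q K v)) = 2^-1 *: q I (q x (q J (q y (q K v)))).
Proof.
move=> xy y_range yI J_lt3 K_lt3 JI JK.
have JyK : q y (q K v) = q J (q y (q K v)).
  have Jy : J != offdiag_block y by rewrite yI.
  by rewrite -{1}(Q_peirce_half (q K v) J_lt3 y_range Jy) (Q_diag_orth _ J_lt3 K_lt3 JK) Qr0 addr0.
rewrite -QZr (Q_basis_prod _ xy) QZr QDr -yI Q_peirce_null // addr0.
by rewrite {1}JyK.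
Qed.

Lemma Q_chain x y z I J K v :
  E3prod (eps F x) (eps F y) = 2^-1 *: eps F z ->
  (3 <= y < 27)%N -> offdiag_block y = I -> (J < 3)%N -> (K < 3)%N -> J != I -> J != K ->
  q I (q z (q K v)) = q I (q x (q J (q y (q K v)))).
Proof. by move=> xy *; apply: scale_half_inj; apply: Q_chain_scaled xy _ _ _ _ _ _. Qed.

Lemma Q_chainN x y z I J K v :
  E3prod (eps F x) (eps F y) = - 2^-1 *: eps F z ->
  (3 <= y < 27)%N -> offdiag_block y = I -> (J < 3)%N -> (K < 3)%N -> J != I -> J != K ->
  q I (q z (q K v)) = - q I (q x (q J (q y (q K v)))).
Proof.
move=> xy *; apply: scale_half_inj; rewrite /= scalerN -(Q_chain_scaled _ xy) //.
by rewrite scaleNr opprK.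
Qed.

Ltac peirce_chain := first [apply: Q_chain | apply: Q_chainN];
  [first [apply: E3prod_eps_half | apply: E3prod_eps_Nhalf]; by vm_compute | by [] ..].

(* [q_0 q_18 q_2] is computed from the same product of eleven operators through
   the bracketings [((x_20 x_5)(x_15 x_19)) x_3] and [x_20 ((x_5 x_15)(x_19 x_3))]
   of octonion units, which differ by a sign. *)
Lemma Q_associator v : q 0 (q 19 (q 1 v)) = 0.
Proof.
have c1 w : q 0 (q 14 (q 2 w)) = - q 0 (q 20 (q 1 (q 5 (q 2 w)))) by peirce_chain.
have c2 w : q 2 (q 7 (q 1 w)) = - q 2 (q 15 (q 0 (q 19 (q 1 w)))) by peirce_chain.
have c3 w : q 0 (q 26 (q 1 w)) = q 0 (q 14 (q 2 (q 7 (q 1 w)))) by peirce_chain.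
have c4 w : q 0 (q 18 (q 2 w)) = - q 0 (q 26 (q 1 (q 3 (q 2 w)))) by peirce_chain.
have c5 w : q 1 (q 25 (q 0 w)) = - q 1 (q 5 (q 2 (q 15 (q 0 w)))) by peirce_chain.
have c6 w : q 0 (q 11 (q 2 w)) = q 0 (q 19 (q 1 (q 3 (q 2 w)))) by peirce_chain.
have c7 w : q 1 (q 9 (q 2 w)) = - q 1 (q 25 (q 0 (q 11 (q 2 w)))) by peirce_chain.
have c8 w : q 0 (q 18 (q 2 w)) = q 0 (q 20 (q 1 (q 9 (q 2 w)))) by peirce_chain.
have c9 w : q 0 (q 19 (q 1 w)) = - q 0 (q 18 (q 2 (q 10 (q 1 w)))) by peirce_chain.
have q0_18_2 w : q 0 (q 18 (q 2 w)) = 0.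
  pose P := q 0 (q 20 (q 1 (q 5 (q 2 (q 15 (q 0 (q 19 (q 1 (q 3 (q 2 w)))))))))).
  have bracket1 : q 0 (q 18 (q 2 w)) = - P by rewrite c4 c3 c2 !QNr c1 !opprK.
  have bracket2 : q 0 (q 18 (q 2 w)) = P by rewrite c8 c7 !QNr c6 c5 !QNr !opprK.
  by apply: double_eq0; rewrite {1}bracket1 bracket2 addNr.
by rewrite c9 q0_18_2 oppr0.
Qed.

Lemma Q_one_eq0 v : Q (E3one F) v = 0.
Proof.
have q0_19 w : q 0 (q 19 w) = 0.
  rewrite -(Q_peirce_half w (d := 1)) // QDr Q_associator addr0.
  by rewrite (@Q_diag_orth 0 1).
have q19_eq w : q 19 w = q 1 (q 19 (q 0 w)).
  rewrite -{1}(Q_peirce_half w (d := 0)) // q0_19 add0r.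
  by rewrite -{1}(Q_peirce_half (q 0 w) (d := 1)) // (@Q_diag_orth 1 0) // Qr0 addr0.
have q01 w : q 0 w + q 1 w = 0.
  have sq19 : E3prod (eps F 19) (eps F 19) = eps F 0 + eps F 1.
    by apply: E3prod_eps_add; vm_compute.
  by rewrite (Q_square _ sq19) [in LHS]q19_eq q0_19 Qr0 Qr0.
have q0 w : q 0 w = 0.
  have := q01 (q 0 w); rewrite Q_diag_idem // (@Q_diag_orth 1 0) //.
  by rewrite addr0.
have q1 w : q 1 w = 0 by have := q01 w; rewrite q0 add0r.
have q2 w : q 2 w = 0.
  have sq11 : E3prod (eps F 11) (eps F 11) = eps F 0 + eps F 2.
    by apply: E3prod_eps_add; vm_compute.
  have q11 u : q 11 u = 0 by rewrite -(Q_peirce_half u (d := 0)) // !q0 Qr0 addr0.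
  by have := Q_square w sq11; rewrite q0 add0r q11.
by rewrite /E3one !QDl q0 q1 q2 !addr0.
Qed.

End SpecialRepresentation.

Section LieElements.
Variable K : fieldType.
Implicit Types a b : E3 K.

Definition eltX a : Lel (E3 K) := mkL a (@zf K (E3 K)) (@zb K (E3 K)).
Definition eltL a : Lel (E3 K) := mkL 0 (Lmul (@E3prod K) a) (@zb K (E3 K)).
Definition eltY : Lel (E3 K) := mkL 0 (@zf K (E3 K)) (Abar (@E3prod K)).

Lemma inL_eltX a : inL (@E3prod K) (eltX a).
Proof.
by split; [exists [::], [::] => x | exists [::], [::] => x y]; rewrite !big_nil addr0.
Qed.

Lemma inU0_Lmul a : inU0 (@E3prod K) (Lmul (@E3prod K) a).
Proof. by exists [:: (1, a)], [::] => x; rewrite big_cons !big_nil scale1r !addr0. Qed.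

Lemma inU1_Abar : inU1 (@E3prod K) (Abar (@E3prod K)).
Proof. by exists [:: 1], [::] => x y; rewrite big_cons !big_nil scale1r !addr0. Qed.

Lemma inL_eltL a : inL (@E3prod K) (eltL a).
Proof.
by split; [exact: inU0_Lmul | exists [::], [::] => x y; rewrite !big_nil addr0].
Qed.

Lemma inL_eltY : inL (@E3prod K) eltY.
Proof.
by split; [exists [::], [::] => x; rewrite !big_nil addr0 | exact: inU1_Abar].
Qed.

Lemma homog_eltX a : homog (@E3prod K) (-1) (eltX a).
Proof. by left; split => //; exists a. Qed.

Lemma homog_eltL a : homog (@E3prod K) 0 (eltL a).
Proof.
by right; left; split => //; exists (Lmul (@E3prod K) a); split => //; exact: inU0_Lmul.
Qed.

Lemma homog_eltY : homog (@E3prod K) 1 eltY.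
Proof.
by right; right; split => //; exists (Abar (@E3prod K)); split => //; exact: inU1_Abar.
Qed.

Lemma Lbr_eltY_eltX a : Lbr eltY (eltX a) = eltL a.
Proof.
rewrite /Lbr /eltY /eltX /eltL /=; congr mkL.
- by rewrite /zf subrr.
- apply: functional_extensionality => z.
  by rewrite /fcomm /BAbr /zf /zb /Abar /Lmul subrr add0r subr0.
- apply: functional_extensionality => u; apply: functional_extensionality => w.
  by rewrite /SBbr /zf /zb /Abar E3prod0l E3prod0r !subr0.
Qed.

Lemma Lbr_eltL_eltX a b : Lbr (eltL a) (eltX b) = eltX (E3prod a b).
Proof.
rewrite /Lbr /eltL /eltX /=; congr mkL.
- by rewrite /zf /Lmul subr0.
- apply: functional_extensionality => z.
  by rewrite /fcomm /BAbr /zf /zb /Lmul E3prod0r ?subr0 ?addr0.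
- apply: functional_extensionality => u; apply: functional_extensionality => w.
  by rewrite /SBbr /zf /zb /Lmul E3prod0r ?subr0.
Qed.

Lemma eltX_linear c a b : Ladd (Lscale c (eltX a)) (eltX b) = eltX (c *: a + b).
Proof.
rewrite /Ladd /Lscale /eltX /=; congr mkL.
- by apply: functional_extensionality => z; rewrite /zf scaler0 addr0.
- apply: functional_extensionality => u; apply: functional_extensionality => w.
  by rewrite /zb scaler0 addr0.
Qed.

End LieElements.

Section GradedRepresentation.
Variables (F : numFieldType) (V : lmodType F) (W : nat -> V -> Prop).
Variable rho : Lel (E3 F) -> V -> V.
Hypothesis rho_graded : graded_rep (@E3prod F) 2 W rho.

Local Notation X a := (rho (eltX a)).
Local Notation L a := (rho (eltL a)).
Local Notation Y := (rho (eltY F)).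

Lemma rho_linear x : inL (@E3prod F) x -> linear (rho x).
Proof. by case: rho_graded => [[rho_lin _] _] /rho_lin. Qed.

Lemma rho_bracket x y v : inL (@E3prod F) x -> inL (@E3prod F) y ->
  rho (Lbr x y) v = rho x (rho y v) - rho y (rho x v).
Proof. by case: rho_graded => [[_ [_ rho_br]] _] /rho_br Hx /Hx. Qed.

Lemma rho_grading i x j v : homog (@E3prod F) i x -> (1 <= j <= 2)%N -> W j v ->
  Vext 2 W (i + j%:Z) (rho x v).
Proof. by case: rho_graded => [_ [_ [_ [_ rho_gr]]]] /rho_gr; apply. Qed.

Lemma W_decomp v : exists v1 w, [/\ W 1 v1, W 2 w & v = v1 + w].
Proof.
case: rho_graded => [_ [_ [decomp _]]]; have [vs [Wvs ->]] := decomp v.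
by exists (vs 1%N), (vs 2%N); rewrite big_nat_recr //= big_nat1; split => //; apply: Wvs.
Qed.

Lemma W2_scale c w : W 2 w -> W 2 (c *: w).
Proof.
case: rho_graded => [_ [Wsub _]] W2w; have [[W0 WZD] _] := Wsub 2%N isT.
by rewrite -[_ *: w]addr0; apply: WZD.
Qed.

Lemma X_W1 a v : W 1 v -> X a v = 0.
Proof. by move=> W1v; have := rho_grading (homog_eltX a) (j := 1) isT W1v. Qed.

Lemma X_W2 a v : W 2 v -> W 1 (X a v).
Proof. by move=> W2v; have := rho_grading (homog_eltX a) (j := 2) isT W2v. Qed.

Lemma Y_W1 v : W 1 v -> W 2 (Y v).
Proof. by move=> W1v; have := rho_grading (homog_eltY F) (j := 1) isT W1v. Qed.

Lemma Y_W2 v : W 2 v -> Y v = 0.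
Proof. by move=> W2v; have := rho_grading (homog_eltY F) (j := 2) isT W2v. Qed.

Lemma L_W2 a v : W 2 v -> W 2 (L a v).
Proof. by move=> W2v; have := rho_grading (homog_eltL a) (j := 2) isT W2v. Qed.

Lemma L_YX a v : L a v = Y (X a v) - X a (Y v).
Proof. by rewrite -Lbr_eltY_eltX rho_bracket //; [exact: (inL_eltY F) | exact: inL_eltX]. Qed.

Lemma X_LX a b v : X (E3prod a b) v = L a (X b v) - X b (L a v).
Proof. by rewrite -Lbr_eltL_eltX rho_bracket //; [exact: inL_eltL | exact: inL_eltX]. Qed.

Lemma X_lin_elt c a b v : X (c *: a + b) v = c *: X a v + X b v.
Proof.
rewrite -eltX_linear.
by case: rho_graded => [[_ [rho_lin _]] _]; apply: rho_lin; exact: inL_eltX.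
Qed.

Lemma L_W2_YX a w : W 2 w -> L a w = Y (X a w).
Proof. by move=> W2w; rewrite L_YX (Y_W2 W2w) (linear_fun0 (rho_linear (inL_eltX a))) subr0. Qed.

Lemma XY_W1 a u : W 1 u -> X a (Y u) = - L a u.
Proof.
by move=> W1u; rewrite L_YX (X_W1 a W1u) (linear_fun0 (rho_linear (inL_eltY F))) sub0r opprK.
Qed.

Lemma L_anticomm_W2 a b w : W 2 w -> L a (L b w) + L b (L a w) = - L (E3prod a b) w.
Proof.
move=> W2w; have W1Xw := X_W2 b W2w.
have LX : L a (X b w) = X (E3prod a b) w + X b (L a w) by rewrite X_LX subrK.
rewrite (L_W2_YX b W2w) (L_W2_YX a (Y_W1 W1Xw)) (XY_W1 a W1Xw) LX.
rewrite (linear_funN (rho_linear (inL_eltY F))) (linear_funD (rho_linear (inL_eltY F))).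
by rewrite -(L_W2_YX _ W2w) -(L_W2_YX _ (L_W2 a W2w)) opprD subrK.
Qed.

Definition Qrho a v : V := - 2%:R *: Y (X a v).

Lemma Qrho_lin_elt v : linear (fun a => Qrho a v).
Proof.
move=> c a b; rewrite /Qrho X_lin_elt (rho_linear (inL_eltY F)).
by rewrite scalerDr !scalerA mulrC.
Qed.

Lemma Qrho_lin a : linear (Qrho a).
Proof.
move=> c u w; rewrite /Qrho (rho_linear (inL_eltX a)) (rho_linear (inL_eltY F)).
by rewrite scalerDr !scalerA mulrC.
Qed.

Lemma Qrho_W1 a v1 v : W 1 v1 -> Qrho a (v1 + v) = Qrho a v.
Proof.
by move=> W1v1; rewrite /Qrho (linear_funD (rho_linear (inL_eltX a))) (X_W1 a W1v1) add0r.
Qed.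

Lemma Qrho_W2 a w : W 2 w -> Qrho a w = - 2%:R *: L a w.
Proof. by move=> W2w; rewrite /Qrho -L_W2_YX. Qed.

Lemma Qrho_jordan a b v :
  Qrho (E3prod a b) v = 2^-1 *: (Qrho a (Qrho b v) + Qrho b (Qrho a v)).
Proof.
have [v1 [w [W1v1 W2w ->]]] := W_decomp v.
rewrite !(Qrho_W1 _ _ W1v1) !(Qrho_W2 _ W2w) !Qrho_W2; try by apply/W2_scale/L_W2.
rewrite !(linear_funZ (rho_linear (inL_eltL _))) !scalerA -scalerDr.
rewrite L_anticomm_W2 // !scalerN scalerA -scaleNr; congr (_ *: _).
by field.
Qed.

Let E3prod1 a : E3prod (E3one F) a = a := E3prod1l (two_neq0 F) a.

Lemma L_one_W2 w : W 2 w -> L (E3one F) w = 0.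
Proof.
move=> W2w; have := Q_one_eq0 Qrho_lin_elt Qrho_lin Qrho_jordan w.
by rewrite Qrho_W2 // => /eqP; rewrite scaler_eq0 oppr_eq0 (negbTE (two_neq0 F)) => /eqP.
Qed.

Lemma X_one_W2 w : W 2 w -> X (E3one F) w = 0.
Proof.
move=> W2w; set e := E3one F; have Lew := L_one_W2 W2w.
rewrite -{1}(E3prod1 e) X_LX Lew (linear_fun0 (rho_linear (inL_eltX e))) subr0.
have := XY_W1 e (X_W2 e W2w); rewrite -(L_W2_YX e W2w) Lew.
by rewrite (linear_fun0 (rho_linear (inL_eltX e))) => /esym /eqP; rewrite oppr_eq0 => /eqP.
Qed.

Lemma rho_eltX_eq0 a v : X a v = 0.
Proof.
have [v1 [w [W1v1 W2w ->]]] := W_decomp v.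
rewrite (linear_funD (rho_linear (inL_eltX a))) (X_W1 a W1v1) add0r.
rewrite -(E3prod1 a) X_LX (L_one_W2 W2w) (linear_fun0 (rho_linear (inL_eltX a))) subr0.
have := XY_W1 (E3one F) (X_W2 a W2w); rewrite X_one_W2; last exact/Y_W1/X_W2.
by move=> /esym /eqP; rewrite oppr_eq0 => /eqP.
Qed.

End GradedRepresentation.

Theorem mainTheorem6 (V : lmodType Cc) (W : nat -> V -> Prop)
    (rho : Lel (E3 Cc) -> V -> V) :
  ~ (graded_rep (@E3prod Cc) 2 W rho /\
     exists (a : E3 Cc) (v : V), rho (mkL a (@zf Cc (E3 Cc)) (@zb Cc (E3 Cc))) v <> 0).
Proof. move=> [rho_graded [a [v]]]; apply; exact: (rho_eltX_eq0 rho_graded). Qed.
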